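(* Let $A\in\mathbb{R}^{n\times n}$, $B\in\mathbb{R}^{n\times m}$ with $(A,B)$ controllable, and let $T>0$. If $\ker(B^\top\widetilde{A}_T^\top)\cap\ker(B^\top)=\{0\}$, then the pair $\big(A_{d,T},\,[B_{d,T}\ \ B_{i,T}]\big)$ is controllable.
   Context: For $T>0$ define $\widetilde{A}_T:=\int_0^T e^{A\tau}\,d\tau$, $A_{d,T}:=e^{AT}$, $B_{d,T}:=\widetilde{A}_T B$, $B_{i,T}:=A_{d,T}B$. *)

From HB Require Import structures.
From mathcomp Require Import all_boot all_order all_algebra.
From mathcomp Require Import all_classical all_reals all_analysis.
Set Implicit Arguments. Unset Strict Implicit. Unset Printing Implicit Defensive.
Import Order.TTheory GRing.Theory Num.Theory.
Import numFieldNormedType.Exports.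
Local Open Scope classical_set_scope.
Local Open Scope ring_scope.

Definition expmx (R : realType) (n : nat) (A : 'M[R]_n) (t : R) : 'M[R]_n :=
  limn (series (fun k : nat => (t ^+ k / (k`!)%:R) *: (A ^+ k))).

Definition Atilde (R : realType) (n : nat) (A : 'M[R]_n) (T : R) : 'M[R]_n :=
  \matrix_(i, j) Rintegral lebesgue_measure `[0, T] (fun tau => expmx A tau i j).

Definition ctrb_mx (R : fieldType) (n m : nat) (A : 'M[R]_n) (B : 'M[R]_(n, m))
  : 'M[R]_(n, \sum_(i < n) m) :=
  \mxrow_(i < n) (A ^+ i *m B).

Definition controllable (R : fieldType) (n m : nat) (A : 'M[R]_n) (B : 'M[R]_(n, m))
  : Prop := \rank (ctrb_mx A B) = n.

From HB Require Import structures.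
From mathcomp Require Import all_boot all_order all_algebra.
From mathcomp Require Import all_classical all_reals all_analysis.
From mathcomp Require Import ring.
Import Order.TTheory GRing.Theory Num.Theory.
Import numFieldNormedType.Exports.
Local Open Scope classical_set_scope.
Local Open Scope ring_scope.

(* The matrix exponential is invertible: the truncated exponential polynomials
   e_N(t) and e_N(-t) multiply to 1 up to terms of degree between N and 2N
   (binomial theorem), whose contribution at A is dominated by a tail of the
   scalar series of exp(2|t| n |A|), so e^{At} e^{-At} = 1.
   Since e^{AT} is invertible, Cayley-Hamilton gives a polynomial q with
   q(e^{AT}) e^{AT} = 1. A row vector v annihilating the Kalman matrix of
   (e^{AT}, [Atilde B, e^{AT} B]) annihilates p(e^{AT}) Atilde B and
   p(e^{AT}) e^{AT} B for every polynomial p; taking p = 1 and p = q gives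
   v Atilde B = 0 and v B = 0, hence v = 0 by the kernel hypothesis. *)

Lemma horner_mx_sum {F : comNzRingType} {n} (M : 'M[F]_n.+1) {p : {poly F}} {k} :
  (size p <= k)%N -> horner_mx M p = \sum_(j < k) p`_j *: M ^+ j.
Proof.
move=> sz_p; have {1}-> : p = \poly_(j < k) p`_j.
  apply/polyP => j; rewrite coef_poly; case: ltnP => // kj.
  by rewrite nth_default // (leq_trans sz_p).
rewrite poly_def linear_sum; apply: eq_bigr => j _.
by rewrite linearZ /= rmorphXn /= horner_mx_X.
Qed.

Section KalmanRank.
Variable F : fieldType.

Lemma ctrb_mx_left_ker {n m} (M : 'M[F]_n) (X : 'M[F]_(n, m)) (v : 'rV_n) :
  v *m ctrb_mx M X = 0 -> forall i : 'I_n, v *m (M ^+ i *m X) = 0.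
Proof. by rewrite /ctrb_mx mul_mxrow -(mxrow0 (q_ := fun=> m)) => /eq_mxrowP. Qed.

Lemma left_ker_horner_mx {n m} (M : 'M[F]_n.+1) (X : 'M[F]_(n.+1, m)) (v : 'rV_n.+1) :
  (forall i : 'I_n.+1, v *m (M ^+ i *m X) = 0) ->
  forall p, v *m (horner_mx M p *m X) = 0.
Proof.
move=> vMX p; set c := char_poly M.
have c_neq0 : c != 0 by rewrite -size_poly_eq0 size_char_poly.
rewrite (Pdiv.Field.divp_eq p c) rmorphD rmorphM /= Cayley_Hamilton mulr0 add0r.
have sz_pc : (size (p %% c)%R <= n.+1)%N.
  by rewrite -ltnS -(size_char_poly M) ltn_modpN0.
rewrite (horner_mx_sum M sz_pc) mulmx_suml mulmx_sumr big1 // => j _.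
by rewrite -scalemxAl -scalemxAr vMX scaler0.
Qed.

Lemma unitmx_horner_mulX {n} {M : 'M[F]_n.+1} :
  M \in unitmx -> exists p, horner_mx M (p * 'X) = 1%:M.
Proof.
move=> M_unit; set c := char_poly M.
have c0_neq0 : c`_0 != 0.
  by rewrite char_poly_det mulf_eq0 negb_or signr_eq0 -unitfE -unitmxE.
have take1 : take_poly 1 c = (c`_0)%:P.
  by apply/polyP => -[|i]; rewrite coef_take_poly coefC.
have := Cayley_Hamilton M; rewrite -/c -(poly_take_drop 1 c) take1 rmorphD /=.
rewrite horner_mx_C expr1 => /eqP; rewrite addrC addr_eq0 => /eqP hM.
exists (- (c`_0)^-1 *: drop_poly 1 c).
by rewrite -scalerAl linearZ /= hM scalerN scaleNr opprK scale_scalar_mx mulVf.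
Qed.

Lemma controllable_row_mx_mulmx {n m p} (M : 'M[F]_n) (X : 'M[F]_(n, m))
    (Y : 'M[F]_(n, p)) :
  M \in unitmx -> (forall v : 'rV_n, v *m X = 0 -> v *m Y = 0 -> v = 0) ->
  controllable M (row_mx X (M *m Y)).
Proof.
rewrite /controllable; case: n M X Y => [|n] M X Y M_unit XY_inj.
  by apply/eqP; rewrite -leqn0 rank_leq_row.
apply/eqP/inj_row_free => v /ctrb_mx_left_ker /left_ker_horner_mx vpMXY.
have vpXY q : v *m horner_mx M q *m X = 0 /\ v *m horner_mx M q *m M *m Y = 0.
  move: (vpMXY q); rewrite mulmxA mul_mx_row => /eqP.
  by rewrite row_mx_eq0 mulmxA => /andP[/eqP-> /eqP->].
apply: XY_inj; first by have [] := vpXY 1; rewrite rmorph1 mulmx1.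
have [q qM1] := unitmx_horner_mulX M_unit.
have qM : horner_mx M q *m M = 1%:M by rewrite -qM1 rmorphM /= horner_mx_X.
by have [_] := vpXY q; rewrite -(mulmxA v) qM mulmx1.
Qed.

End KalmanRank.

Section MatrixNorm.
Variable R : realType.

Lemma mx_entry_le_norm {m n} (M : 'M[R]_(m, n)) i j : `|M i j| <= `|M|.
Proof.
rewrite [leRHS]/Num.norm /= mx_normrE.
by apply/bigmax_geP; right; exists (i, j).
Qed.

Lemma mx_norm_le {m n} (M : 'M[R]_(m, n)) c :
  0 <= c -> (forall i j, `|M i j| <= c) -> `|M| <= c.
Proof.
move=> c_ge0 Mc; rewrite [leLHS]/Num.norm /= mx_normrE.
by apply/bigmax_leP; split => // -[i j] _; exact: Mc.
Qed.

Lemma mx_normM {m n p} (P : 'M[R]_(m, n)) (Q : 'M[R]_(n, p)) :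
  `|P *m Q| <= n%:R * `|P| * `|Q|.
Proof.
apply: mx_norm_le => [|i j]; first by rewrite !mulr_ge0.
rewrite mxE (le_trans (ler_norm_sum _ _ _)) //.
rewrite -mulrA mulr_natl.
apply: le_trans (_ : \sum_(l < n) `|P| * `|Q| <= _); last first.
  by rewrite sumr_const card_ord.
apply: ler_sum => l _; rewrite normrM.
by apply: ler_pM => //; exact: mx_entry_le_norm.
Qed.

Lemma mx_normX {n} (A : 'M[R]_n.+1) k : `|A ^+ k| <= (n.+1%:R * `|A|) ^+ k.
Proof.
elim: k => [|k IHk].
  apply: mx_norm_le => // i j; rewrite expr0 mxE.
  by case: (i == j); rewrite ?normr1 ?normr0.
rewrite exprSr -mulmxE (le_trans (mx_normM _ _)) // exprSr mulrA.
by rewrite ler_wpM2r // mulrC ler_wpM2r.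
Qed.

End MatrixNorm.

Section MatrixExponential.
Variable R : realType.

(* Completeness of matrices is declared before their normed-module structure,
   so the join [completeNormedModType] has to be requested explicitly. *)
HB.instance Definition _ m n := Complete.on 'M[R]_(m, n).

Definition expmx_series {n} (A : 'M[R]_n) (t : R) :=
  series (fun k => exp_coeff t k *: A ^+ k).

Lemma expmx_series_cvg {n} (A : 'M[R]_n.+1) t : cvgn (expmx_series A t).
Proof.
apply: normed_cvg.
apply: (@series_le_cvg _ _ (exp_coeff (`|t| * (n.+1%:R * `|A|)))).
- by move=> k /=.
- by move=> k; apply: exp_coeff_ge0; rewrite !mulr_ge0.
- move=> k; rewrite /exp_coeff /= normrZ normrM normfV normrX.
  rewrite [`|_%:R|]ger0_norm // exprMn mulrAC ler_wpM2r ?invr_ge0 //.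
  by rewrite ler_wpM2l ?exprn_ge0 // mx_normX.
- exact: is_cvg_series_exp_coeff.
Qed.

Definition exp_poly (t : R) N : {poly R} := \poly_(k < N) exp_coeff t k.

Lemma expmx_series_horner {n} (A : 'M[R]_n.+1) t N :
  expmx_series A t N = horner_mx A (exp_poly t N).
Proof.
rewrite (horner_mx_sum A (size_poly _ _)) /expmx_series seriesEord /=.
by apply: eq_bigr => k _; rewrite coef_poly ltn_ord.
Qed.

Lemma expmx_seriesN {n} (A : 'M[R]_n.+1) t :
  expmx_series (- A) t = expmx_series A (- t).
Proof.
congr series; apply/funext => k; rewrite /exp_coeff /= -[- A]scaleN1r exprZn.
by rewrite scalerA [(- t) ^+ k]exprNn; congr (_ *: _); ring.
Qed.

Lemma exp_coeff_convolution (a b : R) j :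
  \sum_(i < j.+1) exp_coeff a i * exp_coeff b (j - i)%N = exp_coeff (a + b) j.
Proof.
rewrite /exp_coeff /= addrC exprDn mulr_suml; apply: eq_bigr => i _.
have le_ij : (i <= j)%N by rewrite -ltnS ltn_ord.
have fact_neq0 k : k`!%:R != 0 :> R by rewrite pnatr_eq0 -lt0n fact_gt0.
have bin_neq0 : 'C(j, i)%:R != 0 :> R by rewrite pnatr_eq0 -lt0n bin_gt0.
rewrite -(bin_fact le_ij) -[_ *+ 'C(j, i)]mulr_natr !natrM.
by field; rewrite bin_neq0 !fact_neq0.
Qed.

Lemma norm_coef_exp_poly t N k : `|(exp_poly t N)`_k| <= exp_coeff `|t| k.
Proof.
rewrite coef_poly; case: ifP => _; last by rewrite normr0 exp_coeff_ge0.
by rewrite /exp_coeff /= normrM normfV normrX [`|_%:R|]ger0_norm.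
Qed.

Lemma coef_exp_polyMN t N j : (j < N)%N ->
  (exp_poly t N * exp_poly (- t) N)`_j = (j == 0)%:R.
Proof.
move=> lt_jN; rewrite coefM.
under eq_bigr => i _ do rewrite !coef_poly (leq_ltn_trans (leq_ord i) lt_jN)
  (leq_ltn_trans (leq_subr _ _) lt_jN).
rewrite exp_coeff_convolution subrr /exp_coeff /= expr0n.
by case: j {lt_jN} => [|j]; rewrite ?divr1 ?mul0r.
Qed.

Lemma norm_coef_exp_polyMN t N j :
  `|(exp_poly t N * exp_poly (- t) N)`_j| <= exp_coeff (`|t| + `|t|) j.
Proof.
rewrite coefM -exp_coeff_convolution (le_trans (ler_norm_sum _ _ _)) //.
apply: ler_sum => i _; rewrite normrM; apply: ler_pM => //.
  exact: norm_coef_exp_poly.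
by rewrite -[X in exp_coeff X](normrN t); exact: norm_coef_exp_poly.
Qed.

Lemma norm_horner_exp_polyMN_sub1 {n} (A : 'M[R]_n.+1) t N : (0 < N)%N ->
  `|horner_mx A (exp_poly t N * exp_poly (- t) N - 1)|
    <= \sum_(N <= j < N.*2) exp_coeff ((`|t| + `|t|) * (n.+1%:R * `|A|)) j.
Proof.
move=> N_gt0; set q := _ - 1.
have le_N_2N : (N <= N.*2)%N by rewrite -addnn leq_addr.
have sz_q : (size q <= N.*2)%N.
  rewrite (leq_trans (size_polyD _ _)) // geq_max size_polyN size_poly1 -addnn.
  rewrite (leq_trans N_gt0) ?leq_addr // andbT.
  rewrite (leq_trans (size_polyMleq _ _)) // (leq_trans (leq_pred _)) //.
  by rewrite leq_add // size_poly.
rewrite (horner_mx_sum A sz_q) -(big_mkord xpredT (fun j => q`_j *: A ^+ j)).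
rewrite (big_cat_nat (leq0n N) le_N_2N) /= big_nat big1 ?add0r; last first.
  by move=> j /andP[_ lt_jN]; rewrite /q coefB coef1 coef_exp_polyMN // subrr scale0r.
rewrite (le_trans (ler_norm_sum _ _ _)) // ler_sum_nat // => j /andP[le_Nj _].
have /negbTE j_neq0 : j != 0%N by rewrite -lt0n (leq_trans N_gt0).
rewrite normrZ /q coefB coef1 j_neq0 subr0.
have -> : exp_coeff ((`|t| + `|t|) * (n.+1%:R * `|A|)) j =
    exp_coeff (`|t| + `|t|) j * (n.+1%:R * `|A|) ^+ j.
  by rewrite /exp_coeff /= exprMn mulrAC.
by apply: ler_pM => //; [exact: norm_coef_exp_polyMN | exact: mx_normX].
Qed.

Lemma sum_nat_le_series_tail (f : R^nat) N M :
  (forall k, 0 <= f k) -> cvgn (series f) -> (N <= M)%N ->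
  \sum_(N <= j < M) f j <= limn (series f) - series f N.
Proof.
move=> f_ge0 cvg_f le_NM; rewrite -sub_series_geq // lerB //.
apply: nondecreasing_cvgn_le => //.
by apply/nondecreasing_seqP => k; rewrite -subr_ge0 seriesSB.
Qed.

Lemma expmx_series_mulN_cvg1 {n} (A : 'M[R]_n.+1) t :
  (fun N => expmx_series A t N *m expmx_series (- A) t N) @ \oo --> (1 : 'M[R]_n.+1).
Proof.
set x := (`|t| + `|t|) * (n.+1%:R * `|A|).
set tail := fun N => limn (series (exp_coeff x)) - series (exp_coeff x) N.
have cvg_x := is_cvg_series_exp_coeff x.
apply/subr_cvg0/norm_cvg0P.
apply: (@squeeze_cvgr _ _ _ _ (fun=> 0) tail); last 2 first.
- exact: cvg_cst.
- rewrite -(subrr (limn (series (exp_coeff x)))).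
  by apply: cvgB => //; exact: cvg_cst.
near=> N; apply/andP; split => //.
rewrite expmx_seriesN !expmx_series_horner mulmxE.
rewrite -[X in _ - X](rmorph1 (horner_mx A)) -rmorphM -rmorphB.
rewrite (le_trans (norm_horner_exp_polyMN_sub1 _ _ _ _)) //.
- by near: N; exists 1%N.
- apply: sum_nat_le_series_tail => // [k|]; last by rewrite -addnn leq_addr.
  by rewrite exp_coeff_ge0 // !mulr_ge0.
Unshelve. all: by end_near.
Qed.

Lemma cvg_mx_entry {m n} {f : nat -> 'M[R]_(m, n)} {M : 'M[R]_(m, n)} i j :
  f @ \oo --> M -> (fun k => f k i j) @ \oo --> M i j.
Proof. exact: (continuous_cvg _ (@coord_continuous R m n i j M)). Qed.

Lemma cvg_mulmx_entry {m n p} {f : nat -> 'M[R]_(m, n)} {g : nat -> 'M[R]_(n, p)}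
    {M : 'M[R]_(m, n)} {N : 'M[R]_(n, p)} i j :
  f @ \oo --> M -> g @ \oo --> N ->
  (fun k => (f k *m g k) i j) @ \oo --> (M *m N) i j.
Proof.
move=> fM gN; rewrite mxE; under eq_cvg do rewrite mxE.
apply: cvg_big => // [|l _]; first exact: add_continuous.
by apply: cvgM; exact: cvg_mx_entry.
Qed.

Lemma expmx_mulN {n} (A : 'M[R]_n.+1) t : expmx A t *m expmx (- A) t = 1.
Proof.
apply/matrixP => i j.
have := cvg_mx_entry i j (expmx_series_mulN_cvg1 A t).
have := cvg_mulmx_entry i j (expmx_series_cvg A t) (expmx_series_cvg (- A) t).
by move=> /cvg_lim <- // /cvg_lim <-.
Qed.

Lemma expmx_unitmx {n} (A : 'M[R]_n) t : expmx A t \in unitmx.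
Proof.
case: n A => [|n] A; first by rewrite unitmxE det_mx00 unitr1.
by case/mulmx1_unit: (expmx_mulN A t).
Qed.

End MatrixExponential.

Theorem mainTheorem2 (R : realType) (n m : nat) (A : 'M[R]_n) (B : 'M[R]_(n, m)) (T : R) :
  controllable A B -> 0 < T ->
  (forall x : 'cV[R]_n,
      (B^T *m (Atilde A T)^T) *m x = 0 -> B^T *m x = 0 -> x = 0) ->
  controllable (expmx A T) (row_mx (Atilde A T *m B) (expmx A T *m B)).
Proof.
move=> _ _ kerB; apply: controllable_row_mx_mulmx; first exact: expmx_unitmx.
move=> v vAtB vB; apply: trmx_inj; rewrite trmx0; apply: kerB.
  by rewrite -!trmx_mul vAtB trmx0.
by rewrite -trmx_mul vB trmx0.
Qed.
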